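(* Let $(Q,\cdot)$ be a magma and $e\in Q$. Then $(Q,\cdot,e)$ is a double Ward quasigroup if and only if $(Q,\cdot)$ is cancellative and satisfies $(ee\cdot xz)(ey\cdot z)=xy$ for all $x,y,z\in Q$.
   Context: A quasigroup is a magma in which $ax=b$ and $ya=b$ have unique solutions for all $a,b$. A double Ward quasigroup $(Q,\cdot,e)$ is a quasigroup with an element $e$ such that $(ee\cdot xz)(ey\cdot z)=xy$ for all $x,y,z$. A magma is cancellative if $ax=ay$ implies $x=y$ and $xa=ya$ implies $x=y$. *)

Definition is_quasigroup {Q : Type} (mul : Q -> Q -> Q) : Prop :=
  (forall a b : Q, exists x : Q, mul a x = b /\ forall x', mul a x' = b -> x' = x) /\
  (forall a b : Q, exists y : Q, mul y a = b /\ forall y', mul y' a = b -> y' = y).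

Definition double_ward_identity {Q : Type} (mul : Q -> Q -> Q) (e : Q) : Prop :=
  forall x y z : Q, mul (mul (mul e e) (mul x z)) (mul (mul e y) z) = mul x y.

Definition double_ward_quasigroup {Q : Type} (mul : Q -> Q -> Q) (e : Q) : Prop :=
  is_quasigroup mul /\ double_ward_identity mul e.

Definition cancellative {Q : Type} (mul : Q -> Q -> Q) : Prop :=
  (forall a x y : Q, mul a x = mul a y -> x = y) /\
  (forall a x y : Q, mul x a = mul y a -> x = y).

(* Writing [f = ee], cancellation applied to a few instances of the identity first
   gives [f = e].  The identity then collapses to [(e . xz)(ey . z) = xy], whose
   instances yield [e(xe) = x] and [(ey)e = y], and from these the explicit
   solutions [a (b((ae)e)) = b] and [(e((eb)(ae))) a = b]; uniqueness of the
   solutions is cancellation. *)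


Lemma quasigroup_cancellative {Q : Type} (mul : Q -> Q -> Q) :
  is_quasigroup mul -> cancellative mul.
Proof.
  intros [HL HR]; split.
  - intros a x y Hxy.
    destruct (HL a (mul a x)) as [s [_ Hs]].
    rewrite (Hs x eq_refl), (Hs y (eq_sym Hxy)); reflexivity.
  - intros a x y Hxy.
    destruct (HR a (mul x a)) as [s [_ Hs]].
    rewrite (Hs x eq_refl), (Hs y (eq_sym Hxy)); reflexivity.
Qed.

Lemma cancellative_solvable_quasigroup {Q : Type} (mul : Q -> Q -> Q) :
  cancellative mul ->
  (forall a b : Q, exists x : Q, mul a x = b) ->
  (forall a b : Q, exists y : Q, mul y a = b) ->
  is_quasigroup mul.
Proof.
  intros [CL CR] SL SR; split.
  - intros a b. destruct (SL a b) as [x Hx].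
    exists x; split; [exact Hx|].
    intros x' Hx'. apply (CL a). congruence.
  - intros a b. destruct (SR a b) as [y Hy].
    exists y; split; [exact Hy|].
    intros y' Hy'. apply (CR a). congruence.
Qed.

Section CancellativeDoubleWard.

Variables (Q : Type) (mul : Q -> Q -> Q) (e : Q).
Hypothesis mul_cancel : cancellative mul.
Hypothesis ward : double_ward_identity mul e.

Lemma e_idempotent : mul e e = e.
Proof.
  destruct mul_cancel as [CL CR].
  set (f := mul e e).
  assert (Hfff : mul (mul f f) (mul f e) = f) by exact (ward e e e).
  assert (Hefe : mul (mul e (mul f e)) (mul f e) = mul f e).
  { apply (CL (mul f f)).
    pose proof (ward (mul f f) (mul f e) (mul f e)) as H.
    fold f in H; rewrite Hfff in H.
    rewrite H; symmetry; exact Hfff. }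
  assert (Hffe : mul (mul f (mul f e)) (mul f e) = mul f e) by exact (ward f e e).
  apply (CR (mul f e)), (CR (mul f e)).
  rewrite Hffe; symmetry; exact Hefe.
Qed.

Lemma ward_e (x y z : Q) :
  mul (mul e (mul x z)) (mul (mul e y) z) = mul x y.
Proof. pose proof (ward x y z) as H; rewrite e_idempotent in H; exact H. Qed.

Lemma mul_e_mul_e_l (x : Q) : mul e (mul x e) = x.
Proof.
  destruct mul_cancel as [_ CR].
  assert (Hxe : mul (mul e (mul x e)) e = mul x e).
  { pose proof (ward_e x e e) as H; rewrite !e_idempotent in H; exact H. }
  symmetry; apply (CR x).
  pose proof (ward_e (mul e (mul x e)) x e) as H.
  rewrite Hxe, ward_e in H; exact H.
Qed.

Lemma mul_e_mul_e_r (y : Q) : mul (mul e y) e = y.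
Proof.
  destruct mul_cancel as [CL _].
  apply (CL e).
  pose proof (ward_e e y e) as H; rewrite mul_e_mul_e_l in H; exact H.
Qed.

Lemma ward_left_solution (a b : Q) : mul a (mul b (mul (mul a e) e)) = b.
Proof.
  pose proof (ward_e e (mul b e) (mul (mul a e) e)) as H.
  rewrite !mul_e_mul_e_l in H; exact H.
Qed.

Lemma ward_right_solution (a b : Q) : mul (mul e (mul (mul e b) (mul a e))) a = b.
Proof.
  pose proof (ward_e (mul e b) e (mul a e)) as H.
  rewrite e_idempotent, mul_e_mul_e_r, mul_e_mul_e_l in H; exact H.
Qed.

End CancellativeDoubleWard.

Theorem theorem4p11 (Q : Type) (mul : Q -> Q -> Q) (e : Q) :
  double_ward_quasigroup mul e <-> (cancellative mul /\ double_ward_identity mul e).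
Proof.
  split.
  - intros [Hq Hw]; split; [exact (quasigroup_cancellative mul Hq) | exact Hw].
  - intros [Hc Hw]; split; [|exact Hw].
    apply cancellative_solvable_quasigroup; [exact Hc | |].
    + intros a b; exists (mul b (mul (mul a e) e)).
      exact (ward_left_solution Q mul e Hc Hw a b).
    + intros a b; exists (mul e (mul (mul e b) (mul a e))).
      exact (ward_right_solution Q mul e Hc Hw a b).
Qed.
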